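(* Let $n\ge1$, $p$ a prime dividing $n$, and $\prec$ any term order on the monomials of $\mathbb{C}[x_1,\ldots,x_n]$. Then $\mathrm{Sm}(\prec,B_i)=\mathrm{Min}(\prec)$ for each $0\le i\le p-1$.
   Context: $\omega_1=e^{2\pi i/p}$, $\omega_j=\omega_1^j$; $B=\{1,\omega_1,\ldots,\omega_{p-1}\}^n$, $B_j=\{(t_1,\ldots,t_n)\in B: t_1\cdots t_n=\omega_j\}$. $D=\{x_1^{u_1}\cdots x_n^{u_n}: 0\le u_i\le p-1\}$; on $D$, $x^u\equiv x^v$ iff there is $0\le k\le p-1$ with $u_i+k\equiv v_i\pmod p$ for all $i$. $\mathrm{Min}(\prec)$ is the set of monomials in $D$ that are the $\prec$-minimal element of their $\equiv$-class. $\mathrm{Sm}(\prec,X)$ is the set of monomials that are not the $\prec$-leading monomial of any nonzero polynomial vanishing on $X$. *)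

From HB Require Import structures.
From mathcomp Require Import all_boot all_order all_algebra.
Set Implicit Arguments. Unset Strict Implicit. Unset Printing Implicit Defensive.
Import Order.TTheory GRing.Theory Num.Theory.
Local Open Scope ring_scope.

Definition mono (n : nat) := {ffun 'I_n -> nat}.
Definition mono_one (n : nat) : mono n := [ffun => 0%N].
Definition mono_mul (n : nat) (a b : mono n) : mono n := [ffun i => (a i + b i)%N].

Definition is_term_order (n : nat) (le : rel (mono n)) : Prop :=
  [/\ reflexive le, antisymmetric le, transitive le & total le] /\
  (forall m, le (mono_one n) m) /\
  (forall a b c, le a b -> le (mono_mul a c) (mono_mul b c)).

Record mpoly (C : nzRingType) (n : nat) := MPoly {
  mcoef : mono n -> C;
  msupp : seq (mono n);
  msuppP : forall m, mcoef m != 0 -> m \in msupp }.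

Definition mono_eval (C : comNzRingType) (n : nat) (m : mono n) (t : 'I_n -> C) : C :=
  \prod_(i < n) t i ^+ m i.

Definition mpoly_eval (C : comNzRingType) (n : nat) (f : mpoly C n) (t : 'I_n -> C) : C :=
  \sum_(m <- undup (msupp f)) mcoef f m * mono_eval m t.

Definition is_lead_mono (C : nzRingType) (n : nat) (le : rel (mono n))
    (f : mpoly C n) (m : mono n) : Prop :=
  mcoef f m != 0 /\ (forall m', mcoef f m' != 0 -> le m' m).

Definition Sm (C : comNzRingType) (n : nat) (le : rel (mono n))
    (X : ('I_n -> C) -> Prop) (m : mono n) : Prop :=
  ~ (exists f : mpoly C n,
        (forall t, X t -> mpoly_eval f t = 0) /\ is_lead_mono le f m).

Definition inD (n p : nat) (u : mono n) : Prop := forall i, (u i <= p - 1)%N.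

Definition mono_equiv (n p : nat) (u v : mono n) : Prop :=
  exists2 k : nat, (k <= p - 1)%N & forall i, (u i + k = v i %[mod p])%N.

Definition Min (n p : nat) (le : rel (mono n)) (u : mono n) : Prop :=
  inD p u /\ (forall v, inD p v -> mono_equiv p u v -> le u v).

(* omega_1 = e^{2 pi i / p}: p.-root (-1) is the p-th root of -1 of least
   nonnegative argument, i.e. e^{i pi/p}; its square is e^{2 pi i/p}. *)
Definition omega1 (C : numClosedFieldType) (p : nat) : C := (p.-root (-1)) ^+ 2.
Definition omega (C : numClosedFieldType) (p j : nat) : C := omega1 C p ^+ j.

Definition inB (C : numClosedFieldType) (n p : nat) (t : 'I_n -> C) : Prop :=
  forall i, exists2 k : nat, (k <= p - 1)%N & t i = omega C p k.

Definition inBj (C : numClosedFieldType) (n p j : nat) (t : 'I_n -> C) : Prop :=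
  inB p t /\ \prod_(i < n) t i = omega C p j.

(* Each t in B_i has coordinates with t_j^p = 1 and product omega_i, so x^u and
   omega_i^k x^v agree on B_i whenever u_j + k = v_j (mod p) for all j.  Hence if m
   is not in Min(<), a binomial with leading monomial m vanishes on B_i.
   Conversely, let f vanish on B_i with leading monomial m in Min(<), and sum
   f(t) t^((p-1)m) over B_i.  A monomial x^z sums to zero over B_i unless all the
   z_j are congruent mod p, and for z = w + (p-1)m with w <= m this forces w = m,
   because (w_j mod p)_j lies in D and is equivalent to m.  So the sum is |B_i|
   times the leading coefficient of f, which is nonzero. *)

From HB Require Import structures.
From mathcomp Require Import all_boot all_order all_algebra zify.
Import Order.TTheory GRing.Theory Num.Theory.
Local Open Scope ring_scope.
Set Implicit Arguments. Unset Strict Implicit.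

Section RootsOfUnity.
Variable C : numClosedFieldType.

Lemma nontrivial_unity_root (n : nat) : (1 < n)%N ->
  exists2 w : C, w ^+ n = 1 & w != 1.
Proof.
move=> n_gt1; have [|w /eqP pw_0] := closed_rootP (\poly_(i < n) (1 : C)) _.
  by rewrite size_poly_eq ?oner_eq0 // -(subnKC n_gt1).
rewrite horner_poly (eq_bigr _ (fun _ _ => mul1r _)) in pw_0.
exists w; first by apply/eqP; rewrite -subr_eq0 subrX1 pw_0 mulr0.
apply: contra_eqN pw_0 => /eqP->; under eq_bigr do rewrite expr1n.
by rewrite sumr_const card_ord pnatr_eq0 -(subnKC n_gt1).
Qed.

Lemma Re_gtN1 (y : C) : `|y| = 1 -> y != -1 -> -1 < 'Re y.
Proof.
move=> ny1 yN1; have := leif_Re_Creal (- y); rewrite normrN ny1 raddfN ltrNl.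
move/lt_leif->; apply: contra yN1 => /ger0_norm; rewrite normrN ny1.
by move=> Ny1; rewrite -[y]opprK -Ny1.
Qed.

Lemma rootCN1_neqN1 (p : nat) : (1 < p)%N -> odd p -> p.-root (-1 : C) != -1.
Proof.
move=> p_gt1 odd_p; have [w wp1 w_neq1] := nontrivial_unity_root p_gt1.
have oddN1 (x : C) : (- x) ^+ p = - x ^+ p by rewrite exprNn -signr_odd odd_p mulN1r.
have [y [yp yN1 Imy]] : exists y : C, [/\ y ^+ p = -1, y != -1 & 0 <= 'Im y].
  have ywp : (- w) ^+ p = -1 by rewrite oddN1 wp1.
  have ywN1 : - w != -1 by rewrite eqr_opp.
  have [Imw|Imw] := boolP (0 <= 'Im (- w)); first by exists (- w).
  exists (- w)^*; split; first by rewrite -rmorphXn ywp rmorphN1.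
    by apply: contra ywN1 => /eqP e; rewrite -(conjCK (- w)) e conjCN1.
  rewrite Im_conj oppr_ge0 real_leNgt ?rpred0 ?Creal_Im //.
  by apply: contra Imw; apply: ltW.
apply/eqP=> rN1; have := rootC_Re_max (ltnW p_gt1) yp Imy.
rewrite rN1 (Creal_ReP (-1 : C) _) ?rpredN1 //.
have /Re_gtN1/(_ yN1) : `|y| = 1.
  apply/eqP; rewrite -(pexpr_eq1 (n := p)) ?normr_ge0 ?(ltnW p_gt1) //.
  by rewrite -normrX yp normrN1.
by rewrite real_ltNge ?rpredN1 ?Creal_Re // => /negP.
Qed.

Lemma prim_root_omega1 (p : nat) : prime p -> p.-primitive_root (omega1 C p).
Proof.
move=> pp; have p_gt1 := prime_gt1 pp; have p_gt0 := ltnW p_gt1.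
set r := p.-root (-1 : C); have rp : r ^+ p = -1 by rewrite rootCK.
have wp1 : omega1 C p ^+ p = 1 by rewrite /omega1 -exprM mulnC exprM rp sqrrN expr1n.
have [d prim_d d_dvd] := prim_order_exists p_gt0 wp1.
have /orP[/eqP d1|/eqP dp] := (primeP pp).2 d d_dvd; last by move: prim_d; rewrite dp.
have {prim_d d1} r2 : r ^+ 2 = 1 by rewrite -(prim_expr_order prim_d) d1.
have N1_neq1 : (-1 : C) != 1 by rewrite eq_sym -addr_eq0 -mulr2n pnatr_eq0.
have [p2|p_neq2] := eqVneq p 2; first by move: N1_neq1; rewrite -rp p2 r2 eqxx.
have odd_p : odd p by case: (even_prime pp) p_neq2 => ->.
have := rootCN1_neqN1 p_gt1 odd_p; rewrite -/r -rp.
by rewrite -[in X in _ != X](odd_double_half p) odd_p exprS -mul2n exprM r2 expr1n mulr1 eqxx.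
Qed.

End RootsOfUnity.

Lemma omega1_expr_mod (C : numClosedFieldType) (p a b : nat) : prime p ->
  (a = b %[mod p])%N -> omega1 C p ^+ a = omega1 C p ^+ b.
Proof. by move=> pp e; apply/eqP; rewrite (eq_prim_root_expr (prim_root_omega1 C pp)) e. Qed.

Lemma omega1_neq0 (C : numClosedFieldType) (p : nat) : prime p -> omega1 C p != 0.
Proof. by move=> pp; rewrite (prim_root_eq0 (prim_root_omega1 C pp)) -lt0n prime_gt0. Qed.

Lemma inB_expr_mod (C : numClosedFieldType) (n p a b : nat) (t : 'I_n -> C) (x : 'I_n) :
  prime p -> inB p t -> (a = b %[mod p])%N -> t x ^+ a = t x ^+ b.
Proof.
move=> pp tB e; have [k _ ->] := tB x; rewrite /omega -!(exprM (omega1 C p)).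
by apply: omega1_expr_mod; rewrite // -modnMmr e modnMmr.
Qed.

Lemma mono_mul1m (n : nat) : left_id (mono_one n) (@mono_mul n).
Proof. by move=> a; apply/ffunP => x; rewrite !ffunE add0n. Qed.

Lemma mono_eval_mul (C : comNzRingType) (n : nat) (a b : mono n) (t : 'I_n -> C) :
  mono_eval (mono_mul a b) t = mono_eval a t * mono_eval b t.
Proof. by rewrite /mono_eval -big_split; apply: eq_bigr => x _; rewrite ffunE exprD. Qed.

Lemma term_order_le_mul (n : nat) (le : rel (mono n)) (a b : mono n) :
  is_term_order le -> le b (mono_mul a b).
Proof. by case=> _ [le1m leMm]; have := leMm _ _ b (le1m a); rewrite mono_mul1m. Qed.

Section Binomial.
Variables (C : nzRingType) (n : nat).

Lemma binomial_supp (a b : mono n) (c : C) (u : mono n) :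
  (u == a)%:R - (u == b)%:R * c != 0 -> u \in [:: a; b].
Proof. by rewrite !inE; case: (u == a) (u == b) => [] []; rewrite ?mul0r ?subrr ?eqxx. Qed.

Definition binomial (a b : mono n) (c : C) : mpoly C n :=
  MPoly (@binomial_supp a b c).

Lemma binomial_lead (le : rel (mono n)) (a b : mono n) (c : C) :
  reflexive le -> a != b -> le b a -> is_lead_mono le (binomial a b c) a.
Proof.
move=> le_refl ab ba; split => /=; first by rewrite eqxx (negbTE ab) mul0r subr0 oner_eq0.
by move=> u /binomial_supp; rewrite !inE => /orP[] /eqP->.
Qed.

End Binomial.

Lemma binomial_eval (C : comNzRingType) (n : nat) (a b : mono n) (c : C) (t : 'I_n -> C) :
  a != b -> mpoly_eval (binomial a b c) t = mono_eval a t - c * mono_eval b t.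
Proof.
move=> ab; rewrite /mpoly_eval /= inE (negbTE ab) /= big_cons big_seq1 /=.
rewrite eqxx (negbTE ab) eq_sym (negbTE ab) eqxx /=.
by rewrite mul0r subr0 mul1r sub0r mul1r mulNr.
Qed.

Lemma not_Sm_binomial (C : comNzRingType) (n : nat) (le : rel (mono n))
    (X : ('I_n -> C) -> Prop) (a b : mono n) (c : C) :
  reflexive le -> a != b -> le b a ->
  (forall t, X t -> mono_eval a t = c * mono_eval b t) -> ~ Sm le X a.
Proof.
move=> le_refl ab ba Xab; apply; exists (binomial a b c); split.
  by move=> t Xt; rewrite binomial_eval // Xab // subrr.
exact: binomial_lead.
Qed.

Section SmIsMin.
Variables (C : numClosedFieldType) (n p i : nat) (le : rel (mono n)).
Hypotheses (pp : prime p) (le_order : is_term_order le).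

Lemma Sm_inD (m : mono n) : Sm le (@inBj C n p i) m -> inD p m.
Proof.
have [[le_refl _ _ _] _] := le_order; have p_gt0 := prime_gt0 pp.
move=> Sm_m x; rewrite leq_subRL // add1n leqNgt ltnS; apply/negP => p_le_m.
pose m' : mono n := [ffun y => if y == x then m y - p else m y]%N.
have mm' : m != m'.
  apply/eqP => /ffunP /(_ x); rewrite ffunE eqxx.
  by move: p_le_m; set k := m x; lia.
apply: (not_Sm_binomial (b := m') (c := 1)) Sm_m => //.
  pose q : mono n := [ffun y => if y == x then p else 0]%N.
  have -> : m = mono_mul q m'.
    by apply/ffunP => y; rewrite !ffunE; case: eqP => [->|]; rewrite ?subnKC.
  exact: term_order_le_mul.
move=> t [tB _]; rewrite mul1r; apply: eq_bigr => y _; rewrite ffunE.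
case: eqP => // ->; apply: inB_expr_mod pp tB _.
by rewrite -[in LHS](subnK p_le_m) modnDr.
Qed.

Lemma Sm_le_equiv (m v : mono n) :
  Sm le (@inBj C n p i) m -> mono_equiv p m v -> le m v.
Proof.
have [[le_refl _ _ le_total] _] := le_order.
move=> Sm_m [k _ mv]; have [<-|m_neq_v] := eqVneq m v; first exact: le_refl.
case/orP: (le_total m v) => // vm; exfalso.
apply: (not_Sm_binomial (b := v) (c := (omega C p i ^+ k)^-1)) Sm_m => // t [tB t_prod].
have -> : mono_eval v t = mono_eval m t * omega C p i ^+ k.
  rewrite -t_prod -prodrXl /mono_eval -big_split; apply: eq_bigr => y _ /=.
  by rewrite -exprD (inB_expr_mod _ pp tB (esym (mv y))).
by rewrite mulrCA mulVf ?mulr1 // /omega -(exprM (omega1 C p)) expf_neq0 ?omega1_neq0.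
Qed.

End SmIsMin.

Lemma prodr_supp2 (R : comPzSemiRingType) (I : finType) (F : I -> R) (j l : I) :
  j != l -> (forall x, x != j -> x != l -> F x = 1) -> \prod_x F x = F j * F l.
Proof.
move=> j_neq_l F1; rewrite (bigD1 j) // (bigD1 l) 1?eq_sym //= big1 ?mulr1 //.
by move=> x /andP[]; apply: F1.
Qed.

Lemma sumr_eq0_scaled_perm (R : idomainType) (I : finType) (A : {pred I})
    (F : I -> R) (phi : I -> I) (c : R) :
  injective phi -> (forall a, (phi a \in A) = (a \in A)) ->
  (forall a, F (phi a) = F a * c) -> c != 1 -> \sum_(a in A) F a = 0.
Proof.
move=> phi_inj phiA Fphi c_neq1; set s := \sum_(a in A) F a.
have s_eq : s = s * c.
  rewrite {1}/s (reindex_inj phi_inj) (eq_bigl _ _ phiA).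
  by rewrite (eq_bigr _ (fun a _ => Fphi a)) -mulr_suml.
have : s * (1 - c) == 0 by rewrite mulrBr mulr1 -s_eq subrr.
by rewrite mulf_eq0 subr_eq0 [1 == c]eq_sym (negbTE c_neq1) orbF => /eqP.
Qed.

Section PowerSums.
Variables (C : numClosedFieldType) (n p i : nat).
Hypothesis pp : prime p.
Local Notation w := (omega1 C p).

Definition Bpoint (a : {ffun 'I_n -> 'I_p}) : 'I_n -> C := fun x => w ^+ a x.

Definition Bindex : {set {ffun 'I_n -> 'I_p}} :=
  [set a | \prod_x Bpoint a x == w ^+ i].

Definition power_sum (z : mono n) : C := \sum_(a in Bindex) mono_eval z (Bpoint a).

Lemma Bpoint_inBj a : a \in Bindex -> inBj p i (Bpoint a).
Proof.
rewrite inE => /eqP prod_a; split=> // x; exists (a x) => //.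
by rewrite leq_subRL ?prime_gt0 // add1n ltn_ord.
Qed.

Lemma Bindex_neq0 : (0 < n)%N -> (i < p)%N -> (0 < #|Bindex|)%N.
Proof.
move=> n_gt0 lt_ip; pose x0 : 'I_n := Ordinal n_gt0.
pose a0 : {ffun 'I_n -> 'I_p} :=
  [ffun x => if x == x0 then Ordinal lt_ip else Ordinal (prime_gt0 pp)].
apply/card_gt0P; exists a0; rewrite inE (bigD1 x0) //= /Bpoint ffunE eqxx.
by rewrite big1 ?mulr1 // => x /negbTE x_neq0; rewrite ffunE x_neq0.
Qed.

Lemma power_sum_dvd (z : mono n) : (forall x, p %| z x)%N -> power_sum z = #|Bindex|%:R.
Proof.
move=> p_dvd_z; rewrite /power_sum -sumr_const; apply: eq_bigr => a _.
rewrite /mono_eval big1 // => x _; rewrite /Bpoint -exprM.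
rewrite (omega1_expr_mod _ (b := 0) pp) ?expr0 // mod0n; apply/eqP; exact: dvdn_mull.
Qed.

Lemma power_sum_eq0 (z : mono n) (j l : 'I_n) :
  ~~ (z j == z l %[mod p])%N -> power_sum z = 0.
Proof.
move=> z_jl; have p_gt0 := prime_gt0 pp.
have wp : w ^+ p = 1 := prim_expr_order (prim_root_omega1 C pp).
have j_neq_l : j != l by apply: contraNneq z_jl => ->.
pose d (x : 'I_n) : nat := if x == j then 1%N else if x == l then p.-1 else 0%N.
have d_j : d j = 1%N by rewrite /d eqxx.
have d_l : d l = p.-1 by rewrite /d eq_sym (negbTE j_neq_l) eqxx.
have d_out x : x != j -> x != l -> d x = 0%N by rewrite /d => /negbTE-> /negbTE->.
pose shift (a : {ffun 'I_n -> 'I_p}) : {ffun 'I_n -> 'I_p} :=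
  [ffun x => Ordinal (ltn_pmod (a x + d x) p_gt0)].
have Bpoint_shift a x : Bpoint (shift a) x = Bpoint a x * w ^+ d x.
  by rewrite /Bpoint ffunE /= (expr_mod _ wp) exprD.
(* Adding 1 to the j-th exponent and p-1 to the l-th permutes B_i and multiplies
   x^z by w^(z_j - z_l). *)
apply: (sumr_eq0_scaled_perm (phi := shift) (c := w ^+ (z j + p.-1 * z l))).
- move=> a b /ffunP ab; apply/ffunP => x; apply/val_inj.
  move: (ab x); rewrite !ffunE => /(congr1 val) /= /eqP.
  by rewrite eqn_modDr !modn_small // => /eqP.
- move=> a; rewrite !inE (eq_bigr _ (fun x _ => Bpoint_shift a x)) big_split /=.
  rewrite (prodr_supp2 (F := fun x => w ^+ d x) j_neq_l) => [|x xj xl].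
    by rewrite d_j d_l -exprD add1n prednK // wp mulr1.
  by rewrite d_out.
- move=> a; have -> : w ^+ (z j + p.-1 * z l) = \prod_x (w ^+ d x) ^+ z x.
    rewrite (prodr_supp2 j_neq_l) => [|x xj xl]; last by rewrite d_out ?expr0 ?expr1n.
    by rewrite d_j d_l expr1 -(exprM w) exprD.
  by rewrite /mono_eval -big_split; apply: eq_bigr => x _; rewrite Bpoint_shift exprMn.
rewrite -(expr0 w) (eq_prim_root_expr (prim_root_omega1 C pp)).
apply: contra z_jl => /eqP z_jl0.
have : ((z j + p.-1 * z l) + z l = 0 + z l %[mod p])%N by rewrite -modnDml z_jl0 modnDml.
by rewrite -addnA -mulSnr prednK // addnC mulnC modnMDl add0n => ->.
Qed.

Lemma power_sum_moments (f : mpoly C n) (z : mono n) :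
  (forall t, inBj p i t -> mpoly_eval f t = 0) ->
  \sum_(u <- undup (msupp f)) mcoef f u * power_sum (mono_mul u z) = 0.
Proof.
move=> f_van.
transitivity (\sum_(a in Bindex) mpoly_eval f (Bpoint a) * mono_eval z (Bpoint a)).
  rewrite /mpoly_eval; under [RHS]eq_bigr do rewrite mulr_suml.
  rewrite [RHS]exchange_big /=; apply: eq_bigr => u _; rewrite /power_sum mulr_sumr.
  by apply: eq_bigr => a _; rewrite mono_eval_mul mulrA.
by apply: big1 => a /Bpoint_inBj/f_van->; rewrite mul0r.
Qed.

End PowerSums.

Lemma Min_eq_of_congr (n p : nat) (le : rel (mono n)) (m u : mono n) :
  (0 < n)%N -> (0 < p)%N -> is_term_order le -> Min p le m -> le u m ->
  (forall j l : 'I_n, u j + p.-1 * m j = u l + p.-1 * m l %[mod p])%N -> u = m.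
Proof.
move=> n_gt0 p_gt0 le_order [_ m_min] le_um um_congr.
have [[_ le_anti le_trans _] _] := le_order.
have mod_le (k : nat) : (k %% p <= p - 1)%N by rewrite subn1 -ltnS prednK ?ltn_pmod.
pose x0 : 'I_n := Ordinal n_gt0.
pose r : mono n := [ffun x => u x %% p]%N.
have m_equiv_r : mono_equiv p m r.
  exists ((u x0 + p.-1 * m x0) %% p)%N => // x.
  rewrite ffunE modn_mod modnDmr -modnDmr -(um_congr x x0) modnDmr addnCA.
  by rewrite -[(m x + _)%N]mulSn prednK // addnC mulnC modnMDl.
have le_ru : le r u.
  have -> : u = mono_mul [ffun x => u x %/ p * p]%N r.
    by apply/ffunP => x; rewrite !ffunE -divn_eq.
  exact: term_order_le_mul.
apply: le_anti; rewrite le_um /=.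
by apply: le_trans (m_min r _ m_equiv_r) le_ru => x; rewrite ffunE.
Qed.

Lemma Min_Sm (C : numClosedFieldType) (n p i : nat) (le : rel (mono n)) (m : mono n) :
  (0 < n)%N -> prime p -> is_term_order le -> (i < p)%N ->
  Min p le m -> Sm le (@inBj C n p i) m.
Proof.
move=> n_gt0 pp le_order lt_ip m_Min [f [f_van [fm_neq0 f_lead]]].
pose z : mono n := [ffun x => p.-1 * m x]%N.
have others_vanish u : u != m -> mcoef f u * power_sum C p i (mono_mul u z) = 0.
  move=> u_neq_m; have [->|fu_neq0] := eqVneq (mcoef f u) 0; first by rewrite mul0r.
  case: (boolP [forall j, forall l, mono_mul u z j == mono_mul u z l %[mod p]]).
    move=> /forallP uz_congr; case/eqP: u_neq_m.
    apply: Min_eq_of_congr n_gt0 (prime_gt0 pp) le_order m_Min (f_lead u fu_neq0) _.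
    by move=> j l; have /forallP/(_ l)/eqP := uz_congr j; rewrite !ffunE.
  rewrite negb_forall => /existsP[j]; rewrite negb_forall => /existsP[l].
  by move/power_sum_eq0->; rewrite ?mulr0.
have m_supp : m \in undup (msupp f) by rewrite mem_undup; apply: msuppP.
have := power_sum_moments pp z f_van.
rewrite (bigD1_seq m m_supp (undup_uniq _)) /= big1_seq ?addr0; last first.
  by move=> u /andP[/others_vanish].
rewrite power_sum_dvd // => [/eqP|x]; last first.
  by rewrite !ffunE -mulSn prednK ?prime_gt0 // dvdn_mulr.
by rewrite mulf_eq0 (negbTE fm_neq0) pnatr_eq0 /= eqn0Ngt Bindex_neq0.
Qed.

Theorem mainTheorem7 (C : numClosedFieldType) (n p : nat) (le : rel (mono n)) :
  (1 <= n)%N -> prime p -> (p %| n)%N -> is_term_order le ->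
  forall i : nat, (i <= p - 1)%N ->
  forall m : mono n, Sm le (@inBj C n p i) m <-> Min p le m.
Proof.
move=> n_gt0 pp _ le_order i le_ip m; split.
  move=> Sm_m; split=> [|v _]; first exact: (Sm_inD pp le_order Sm_m).
  exact: (Sm_le_equiv pp le_order Sm_m).
apply: Min_Sm => //; have := prime_gt0 pp; lia.
Qed.
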